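(* For every integer $n\ge 2$, the path $P_n$ on $n$ vertices satisfies $IDI(P_n)=2$.
   Context: For a finite simple connected graph $G=(V,E)$ with diameter $d$, a rank assignment is a function $f:V\to\mathbb{R}$; under $f$, the string of a vertex $v$ is the $d$-vector whose $i$-th coordinate is the sum of $f(w)$ over all vertices $w$ with $d(v,w)=i$. The ID-index $IDI(G)$ is the minimum $k$ such that there exists $f:V\to\mathbb{R}$ with $|f(V)|=k$ under which all vertices have distinct strings. *)

From HB Require Import structures.
From mathcomp Require Import all_boot all_order all_algebra.
From mathcomp Require Import Rstruct.
From Stdlib Require Rdefinitions.
Notation R := Rdefinitions.R.

Set Implicit Arguments.
Unset Strict Implicit.
Unset Printing Implicit Defensive.

Import Order.TTheory GRing.Theory Num.Theory.
Local Open Scope ring_scope.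

Definition simple_graph (T : finType) (e : rel T) : Prop :=
  symmetric e /\ irreflexive e.

Definition connected_graph (T : finType) (e : rel T) : Prop :=
  forall x y : T, connect e x y.

Definition has_walk (T : finType) (e : rel T) (x y : T) (k : nat) : bool :=
  [exists p : k.-tuple T, path e x p && (last x p == y)].

(* graph distance: least k with a walk of length k from x to y
   (for a connected graph it is < #|T|, so searching iota 0 #|T| is exact) *)
Definition gdist (T : finType) (e : rel T) (x y : T) : nat :=
  find (has_walk e x y) (iota 0 #|T|).

Definition diameter (T : finType) (e : rel T) : nat :=
  (\max_(x : T) \max_(y : T) gdist e x y)%N.

(* the string of v under f : the d-vector (d = diameter) whose i-th coordinate
   (i = 1..d) is the sum of f w over the w at distance i from v *)
Definition gstring (T : finType) (e : rel T) (f : T -> R) (v : T) : seq R :=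
  [seq \sum_(w : T | gdist e v w == i) f w | i <- iota 1 (diameter e)].

Definition num_ranks (T : finType) (f : T -> R) : nat :=
  size (undup [seq f x | x <- enum T]).

Definition IDI_is (T : finType) (e : rel T) (k : nat) : Prop :=
  (exists f : T -> R, injective (gstring e f) /\ num_ranks f = k) /\
  (forall f : T -> R, injective (gstring e f) -> (k <= num_ranks f)%N).

Definition path_graph (n : nat) : rel 'I_n :=
  fun i j => (i.+1 == j :> nat) || (j.+1 == i :> nat).
Arguments path_graph n : clear implicits.

(* If f is the indicator of an end vertex r of P_n, the string of v records
   d(v, r) = v in the position of its single 1, so strings are distinct and
   two ranks suffice.  A single rank never suffices: for constant f the string
   of v only depends on the distances from v, and the reflection of the path
   swaps its two end vertices while preserving all distances. *)
From mathcomp Require Import all_boot all_order all_algebra.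
From mathcomp Require Import zify Rstruct.

Set Implicit Arguments.
Unset Strict Implicit.
Unset Printing Implicit Defensive.

Import GRing.Theory.

Lemma find_iota0 (P : pred nat) k M :
  (k < M)%N -> P k -> (forall j, (j < k)%N -> ~~ P j) -> find P (iota 0 M) = k.
Proof.
move=> ltkM Pk minP.
have -> : iota 0 M = iota 0 k ++ iota k (M - k) by rewrite -iotaD subnKC 1?ltnW.
rewrite find_cat size_iota -(subnSK ltkM) /= Pk addn0.
have -> // : has P (iota 0 k) = false.
by apply/hasP => -[j]; rewrite mem_iota => /andP[_ /minP /negP].
Qed.

Section GraphDistance.
Variables (T : finType) (e : rel T).

Lemma gdist_eq (x y : T) k :
  (k < #|T|)%N -> has_walk e x y k ->
  (forall j, (j < k)%N -> ~~ has_walk e x y j) -> gdist e x y = k.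
Proof. exact: find_iota0. Qed.

Lemma gdist_le_diameter (x y : T) : (gdist e x y <= diameter e)%N.
Proof.
rewrite /diameter; apply: (@leq_trans (\max_y gdist e x y)%N).
  exact: (@leq_bigmax _ (gdist e x)).
exact: (@leq_bigmax _ (fun x => \max_y gdist e x y)%N).
Qed.

Lemma has_walk_cons (x y z : T) k :
  e z x -> has_walk e x y k -> has_walk e z y k.+1.
Proof.
move=> ezx /existsP[p /andP[walk_p end_p]]; apply/existsP.
by exists [tuple of x :: p]; rewrite /= ezx walk_p.
Qed.

Lemma has_walk_hom (s : T -> T) (x y : T) k :
  (forall u v, e u v -> e (s u) (s v)) ->
  has_walk e x y k -> has_walk e (s x) (s y) k.
Proof.
move=> s_hom /existsP[p /andP[walk_p /eqP <-]]; apply/existsP.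
exists (map_tuple s p); rewrite /= last_map eqxx andbT.
by elim: (tval p) x walk_p => [|z q IH] x //= /andP[/s_hom -> /IH].
Qed.

Variables (s : T -> T) (s_inj : injective s).
Hypothesis s_edge : forall u v, e (s u) (s v) = e u v.

Lemma gdist_aut (x y : T) : gdist e (s x) (s y) = gdist e x y.
Proof.
have s'_edge u v : e (invF s_inj u) (invF s_inj v) = e u v.
  by rewrite -s_edge !f_invF.
apply: eq_find => k; apply/idP/idP => [|]; last first.
  by apply: has_walk_hom => u v; rewrite s_edge.
by move/(has_walk_hom (s := invF s_inj)); rewrite !invF_f; apply => u v; rewrite s'_edge.
Qed.

Lemma gstring_aut (f : T -> R) (v : T) :
  (forall w, f (s w) = f w) -> gstring e f (s v) = gstring e f v.
Proof.
move=> f_s; apply: eq_map => i.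
rewrite (reindex_inj s_inj) /=.
by apply: eq_big => [w|w _]; rewrite ?gdist_aut ?f_s.
Qed.

End GraphDistance.

Lemma num_ranks_le1_const (T : finType) (f : T -> R) (x y : T) :
  (num_ranks f <= 1)%N -> f x = f y.
Proof.
have mem_ranks z : f z \in undup [seq f w | w <- enum T].
  by rewrite mem_undup map_f ?mem_enum.
move: (mem_ranks x) (mem_ranks y); rewrite /num_ranks.
by case: undup => [|a [|]] //=; rewrite !inE => /eqP -> /eqP ->.
Qed.

Lemma aut_num_ranks_gt1 (T : finType) (e : rel T) (s : T -> T) (v : T)
    (f : T -> R) :
  injective s -> (forall x y, e (s x) (s y) = e x y) -> s v != v ->
  injective (gstring e f) -> (1 < num_ranks f)%N.
Proof.
move=> s_inj s_edge s_moves_v f_ok; rewrite ltnNge; apply/negP => f_const.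
move/eqP: s_moves_v; apply; apply: f_ok; apply: gstring_aut => // w.
exact: num_ranks_le1_const.
Qed.

Section Indicator.
Variables (T : finType) (r : T).
Local Open Scope ring_scope.

Definition indicator (w : T) : R := (w == r)%:R.

Lemma nth_gstring_indicator (e : rel T) (v : T) i :
  (i < diameter e)%N ->
  nth 0 (gstring e indicator v) i = (gdist e v r == i.+1)%:R.
Proof.
move=> lt_i_d; rewrite (nth_map 0%N) ?size_iota // nth_iota // add1n.
rewrite big_mkcond (bigD1 r) //= /indicator eqxx big1 => [|w w_ne_r].
  by rewrite addr0; case: eqP.
by rewrite (negbTE w_ne_r); case: ifP.
Qed.

Lemma gstring_indicator_inj (e : rel T) :
  injective (gdist e ^~ r) -> injective (gstring e indicator).
Proof.
move=> dist_inj.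
suff dist_gt0 u v : gstring e indicator u = gstring e indicator v ->
    (0 < gdist e u r)%N -> gdist e u r = gdist e v r.
  move=> u v same; apply: dist_inj.
  have [dv0|dv_gt0] := posnP (gdist e v r); last by rewrite (dist_gt0 v u).
  have [du0|du_gt0] := posnP (gdist e u r); first by rewrite du0 dv0.
  exact: dist_gt0.
move=> same du_gt0; have lt_d : ((gdist e u r).-1 < diameter e)%N.
  by rewrite prednK ?gdist_le_diameter.
have := nth_gstring_indicator u lt_d.
rewrite same nth_gstring_indicator // prednK // eqxx.
by case: eqP => // _ /eqP; rewrite eq_sym oner_eq0.
Qed.

Lemma num_ranks_indicator (w : T) : w != r -> num_ranks indicator = 2%N.
Proof.
move=> w_ne_r; rewrite /num_ranks -[2%N]/(size [:: (1 : R); 0]).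
apply/perm_size/uniq_perm; rewrite ?undup_uniq //= ?inE ?oner_eq0 //.
move=> x; rewrite mem_undup !inE; apply/mapP/idP => [[z _ ->]|].
  by rewrite /indicator; case: (z == r); rewrite eqxx ?orbT.
case/orP=> /eqP ->; [exists r | exists w]; rewrite ?mem_enum //.
  by rewrite /indicator eqxx.
by rewrite /indicator (negbTE w_ne_r).
Qed.

End Indicator.

Section PathGraph.
Variable n : nat.
Local Notation e := (path_graph n).

Lemma path_graph_walk_bound (x : 'I_n) (p : seq 'I_n) :
  path e x p -> (x <= last x p + size p)%N.
Proof.
elim: p x => [|y p IH] x /=; first by rewrite addn0.
by case/andP => /orP[] /eqP xy /IH; rewrite /= addnS; lia.
Qed.

Lemma path_graph_rev_edge (x y : 'I_n) : e (rev_ord x) (rev_ord y) = e x y.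
Proof.
rewrite /path_graph /=; have := ltn_ord x; have := ltn_ord y.
case: (x.+1 == y :> nat) /eqP; case: (y.+1 == x :> nat) /eqP;
case: ((n - x.+1).+1 == n - y.+1 :> nat) /eqP;
by case: ((n - y.+1).+1 == n - x.+1 :> nat) /eqP => /=; lia.
Qed.

End PathGraph.

Section PathGraphEnd.
Variable n : nat.
Local Notation e := (path_graph n.+1).

Lemma path_graph_walk_to0 k (v : 'I_n.+1) : val v = k -> has_walk e v ord0 k.
Proof.
elim: k v => [|k IH] v vk.
  by apply/existsP; exists [tuple] => /=; apply/eqP; apply: val_inj.
have lt_k_n : (k < n.+1)%N by apply: ltnW; rewrite -vk; exact: ltn_ord.
apply: (@has_walk_cons _ _ (inord k)); last by apply: IH; exact: inordK.
by rewrite /path_graph inordK // vk eqxx orbT.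
Qed.

Lemma path_graph_gdist0 (v : 'I_n.+1) : gdist e v ord0 = v.
Proof.
apply: gdist_eq; rewrite ?card_ord ?path_graph_walk_to0 //.
move=> j lt_j_v; apply/negP => /existsP[p /andP[/path_graph_walk_bound]].
by move=> + /eqP end_p; rewrite end_p size_tuple /=; lia.
Qed.

End PathGraphEnd.

Theorem mainTheorem7 (n : nat) (hn : (2 <= n)%N) : IDI_is (path_graph n) 2.
Proof.
case: n hn => [|[|m]] // _; split.
- exists (indicator ord0); split; last exact: (@num_ranks_indicator _ _ ord_max).
  apply: gstring_indicator_inj => u v.
  by rewrite !path_graph_gdist0; apply: val_inj.
- move=> f f_ok; apply: (aut_num_ranks_gt1 (v := ord0) _ _ _ f_ok).
  + exact: rev_ord_inj.
  + exact: path_graph_rev_edge.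
  + by rewrite -(inj_eq val_inj).
Qed.
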